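(* Let $k\ge 2$ and let $G=(\{a,b\},\varphi,a)$ be a D0L-system with $\varphi$ $k$-uniform. Then $G$ is not circular if and only if one of the following holds: (i) $\varphi(a)=\varphi(b)$; (ii) $\varphi(a)=a^k$ or $\varphi(b)=b^k$; (iii) $\varphi(a)=b^k$ and $\varphi(b)=a^k$; (iv) $k=2m+1$ with $m\ge1$, $\varphi(a)=(ab)^ma$ and $\varphi(b)=(ba)^mb$; (v) $k=2m+1$ with $m\ge1$, $\varphi(a)=(ba)^mb$ and $\varphi(b)=(ab)^ma$.
   Context: A D0L-system $G=(\mathcal{A},\varphi,w)$ has language $L(G)=\{\varphi^n(w):n\in\mathbb{N}\}$; $S(L(G))$ is the set of factors of its words. For $u\in S(L(G))$, an interpretation of $u$ is a triple $(p,v,s)$ with $p,s\in\mathcal{A}^*$, $v\in S(L(G))$, $\varphi(v)=pus$. Writing $v=v_1\cdots v_n$, $v'=v'_1\cdots v'_m$, $u=u_1\cdots u_\ell$, interpretations $(p,v,s)$, $(p',v',s')$ are synchronized at position $j$ if there are $i,i'$ with $\varphi(v_1\cdots v_i)=pu_1\cdots u_j$ and $\varphi(v'_1\cdots v'_{i'})=p'u_1\cdots u_j$; $u$ has a synchronizing point at position $j$ if all its interpretations are pairwise synchronized at $j$. A PD0L-system (no letter maps to $\varepsilon$) that is injective on $S(L(G))$ (i.e. $\varphi(u)=\varphi(v)$ with $u,v\in S(L(G))$ implies $u=v$) is circular if there exists $Z$ such that every $u\in S(L(G))$ with $|u|>Z$ has a synchronizing point. A morphism on $\{a,b\}$ is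 $k$-uniform if $|\varphi(a)|=|\varphi(b)|=k$. *)

From HB Require Import structures.
From mathcomp Require Import all_boot.
Set Implicit Arguments. Unset Strict Implicit. Unset Printing Implicit Defensive.

Inductive letter := la | lb.

Definition letter_eqb (x y : letter) : bool :=
  match x, y with la, la | lb, lb => true | _, _ => false end.
Lemma letter_eqP : Equality.axiom letter_eqb.
Proof. by case; case; constructor. Qed.
HB.instance Definition _ := hasDecEq.Build letter letter_eqP.

Definition word := seq letter.

Definition morph (phi : letter -> word) (w : word) : word := flatten (map phi w).

Definition inL (phi : letter -> word) (w x : word) : Prop :=
  exists n, x = iter n (morph phi) w.

Definition inS (phi : letter -> word) (w u : word) : Prop :=
  exists n, infix u (iter n (morph phi) w).

Definition nonerasing (phi : letter -> word) : Prop :=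
  forall x, phi x <> [::].

Definition injective_on_S (phi : letter -> word) (w : word) : Prop :=
  forall u v, inS phi w u -> inS phi w v -> morph phi u = morph phi v -> u = v.

Definition interpretation (phi : letter -> word) (w : word)
  (u p v s : word) : Prop :=
  inS phi w v /\ morph phi v = p ++ u ++ s.

Definition synchronized_at (phi : letter -> word) (u : word)
  (p v p' v' : word) (j : nat) : Prop :=
  (exists i, i <= size v /\ morph phi (take i v) = p ++ take j u) /\
  (exists i', i' <= size v' /\ morph phi (take i' v') = p' ++ take j u).

Definition sync_point (phi : letter -> word) (w u : word) (j : nat) : Prop :=
  j <= size u /\
  forall p v s p' v' s',
    interpretation phi w u p v s -> interpretation phi w u p' v' s' ->
    synchronized_at phi u p v p' v' j.

Definition circular (phi : letter -> word) (w : word) : Prop :=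
  nonerasing phi /\ injective_on_S phi w /\
  exists Z : nat, forall u, inS phi w u -> Z < size u ->
    exists j, sync_point phi w u j.

Definition uniform (k : nat) (phi : letter -> word) : Prop :=
  size (phi la) = k /\ size (phi lb) = k.

Definition alt (m : nat) (x y : letter) : word := flatten (nseq m [:: x; y]) ++ [:: x].

(* In a circular system all interpretations of a long factor cut it at
   positions that agree modulo k.  In case (i) injectivity fails; in cases (ii)
   and (iii) some letter has image c^k while arbitrarily long runs of that
   letter are factors, so long runs of c have interpretations with offsets 0
   and 1; in cases (iv) and (v) the same happens with alternating words.

   Conversely, outside (i)-(v), looking at the blocks of an interpretation shows
   that runs longer than k(2k+2) and alternating factors of length k(k(2k+2)+3)
   do not occur.  If a longer factor had two interpretations with offsets
   p1 < p2 < k, every block of the second would be a shifted concatenation of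
   two consecutive blocks of the first.  The factor contains the transitions
   ab and ba and some square cc, and the three overlaps of phi(a), phi(b) they
   produce force phi(a) = phi(b), through the fact that words commuting with a
   common nonempty word and of equal length are equal. *)

From mathcomp Require Import all_boot zify.
From Stdlib Require Import Classical.
Set Implicit Arguments. Unset Strict Implicit. Unset Printing Implicit Defensive.

Section Words.

Variable T : eqType.

Lemma cat_eq_size (a b c d : seq T) :
  size a = size c -> a ++ b = c ++ d -> a = c /\ b = d.
Proof. by move=> H /eqP; rewrite eqseq_cat // => /andP [/eqP -> /eqP ->]. Qed.

Lemma catsI (s a b : seq T) : s ++ a = s ++ b -> a = b.
Proof. by move/cat_eq_size => /(_ erefl) []. Qed.

Lemma catIs (s a b : seq T) : size a = size b -> a ++ s = b ++ s -> a = b.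
Proof. by move=> H /(cat_eq_size H) []. Qed.

(* Peel copies of [s] off the front of [p] and [q] until they are shorter than [s]. *)
Lemma commuting_words_eq (p q s : seq T) : size p = size q -> 0 < size s ->
  p ++ s = s ++ p -> q ++ s = s ++ q -> p = q.
Proof.
have [n] : exists n, size p <= n by exists (size p).
elim: n p q => [|n IH] p q Hn Hs Hs0 Hp Hq.
  by case: p q Hn Hs {Hp Hq} => // - [].
have take_s r : size r <= size s -> r ++ s = s ++ r -> r = take (size r) s.
  by move=> Hr /(congr1 (take (size r))); rewrite take_size_cat // takel_cat.
have [Hps|Hps] := leqP (size p) (size s).
  by rewrite (take_s p) // (take_s q) -?Hs.
have drop_s r : size s < size r -> r ++ s = s ++ r -> r = s ++ drop (size s) r.
  move=> Hr /(congr1 (take (size s))); rewrite takel_cat ?(ltnW Hr) // take_size_cat //.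
  by move=> E; rewrite -{1}(cat_take_drop (size s) r) E.
have Hqs : size s < size q by rewrite -Hs.
rewrite (drop_s p) // (drop_s q) //; congr (_ ++ _); apply: IH.
- by rewrite size_drop; lia.
- by rewrite !size_drop Hs.
- exact: Hs0.
- by apply: (@catsI s); rewrite catA -drop_s.
- by apply: (@catsI s); rewrite catA -drop_s.
Qed.

Lemma shifted_factors_absurd (xp xs yp ys : seq T) :
  size yp = size xp -> size ys = size xs -> 0 < size xp -> 0 < size xs ->
  xp ++ xs <> yp ++ ys ->
  (xs ++ yp = xp ++ xs \/ xs ++ yp = yp ++ ys) ->
  (ys ++ xp = xp ++ xs \/ ys ++ xp = yp ++ ys) ->
  (xs ++ xp = xp ++ xs \/ xs ++ xp = yp ++ ys) -> False.
Proof.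
move=> Sp Ss Pp Ps Hne H1 H2 H3.
have Fin : xp = yp -> xs = ys -> False by move=> E1 E2; apply: Hne; rewrite E1 E2.
have CE := @commuting_words_eq.
case: H3 => H3; case: H1 => H1; case: H2 => H2.
- have Ey : yp = xp by apply: (@catsI xs); rewrite H1 H3.
  by apply: Fin => //; apply: (@catIs xp) => //; rewrite H2 H3.
- have Ey : yp = xp by apply: (@catsI xs); rewrite H1 H3.
  by apply: Fin => //; apply: (CE _ _ xp) => //; rewrite ?H3 // H2 Ey.
- have Es : ys = xs by apply: (@catIs xp) => //; rewrite H2 H3.
  by apply: Fin => //; apply: (CE _ _ xs) => //; rewrite ?H3 // H1 Es.
- by have [Es Ep] := cat_eq_size Ss (etrans H2 (esym H1)); apply: Fin.
- by have [Es Ep] := cat_eq_size Ss (etrans H2 (esym H1)); apply: Fin.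
- have Es : ys = xs by apply: (@catIs xp) => //; rewrite H2 H3.
  subst ys; apply: Fin => //; apply: (CE _ _ (xs ++ xs)); rewrite ?size_cat //; try lia.
  + by rewrite catA -H1 -catA -H3 catA.
  + by rewrite catA -H3 -catA -H1 catA.
- have Ey : yp = xp by apply: (@catsI xs); rewrite H1 H3.
  subst yp; apply: Fin => //; apply: (CE _ _ (xp ++ xp)); rewrite ?size_cat //; try lia.
  + by rewrite catA H3 -catA H2 catA.
  + by rewrite catA H2 -catA H3 catA.
- have Es : ys = xs by apply: (@catIs xp) => //; rewrite H2 H3.
  by apply: Fin => //; apply: (@catsI xs); rewrite H1 H3.
Qed.

End Words.

Lemma take_drop_mid (T : Type) (p u s : seq T) t n :
  size p <= t -> t + n <= size p + size u ->
  take n (drop t (p ++ u ++ s)) = take n (drop (t - size p) u).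
Proof.
case: n => [|n] H1 H2; first by rewrite !take0.
rewrite drop_cat ltnNge H1 /= drop_cat.
case: ifP => H3; last by lia.
by rewrite takel_cat // size_drop; lia.
Qed.

Arguments morph : simpl never.

Lemma morph_cons phi c w : morph phi (c :: w) = phi c ++ morph phi w.
Proof. by []. Qed.

Lemma morph_cat phi u w : morph phi (u ++ w) = morph phi u ++ morph phi w.
Proof. by rewrite /morph map_cat flatten_cat. Qed.

Lemma infix_morph phi u w : infix u w -> infix (morph phi u) (morph phi w).
Proof.
case/infixP=> [s [s' ->]]; apply/infixP; exists (morph phi s), (morph phi s').
by rewrite !morph_cat.
Qed.

Lemma inS_base phi w : inS phi w w.
Proof. by exists 0; apply: infix_refl. Qed.

Lemma inS_infix phi w u u' : infix u u' -> inS phi w u' -> inS phi w u.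
Proof. by move=> H [n Hn]; exists n; apply: infix_trans H Hn. Qed.

Lemma inS_morph phi w u : inS phi w u -> inS phi w (morph phi u).
Proof. by move=> [n Hn]; exists n.+1; rewrite iterS; apply: infix_morph. Qed.

Lemma inS_interpretation phi w u p v s :
  interpretation phi w u p v s -> inS phi w u.
Proof.
by case=> Sv E; apply: inS_infix (inS_morph Sv); rewrite E; apply: infix_infix.
Qed.

Section UniformMorphism.

Variables (k : nat) (phi : letter -> word).
Hypothesis size_phi : forall c, size (phi c) = k.

Lemma size_morph w : size (morph phi w) = k * size w.
Proof.
elim: w => [|c w IH]; first by rewrite muln0.
by rewrite morph_cons size_cat IH size_phi mulnS.
Qed.

Lemma drop_morph w q : drop (k * q) (morph phi w) = morph phi (drop q w).
Proof.
elim: w q => [|c w IH] q; first by rewrite drop_oversize.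
case: q => [|q]; first by rewrite muln0 !drop0.
rewrite morph_cons drop_cat size_phi ltnNge mulnS leq_addr /= -IH.
by congr drop; lia.
Qed.

Lemma take_morph w q : take (k * q) (morph phi w) = morph phi (take q w).
Proof.
elim: w q => [|c w IH] q; first by rewrite take_oversize.
case: q => [|q]; first by rewrite muln0 !take0.
by rewrite !morph_cons take_cat size_phi ltnNge mulnS leq_addr /= -IH addKn.
Qed.

Lemma nth_block_morph w j :
  j < size w -> take k (drop (k * j) (morph phi w)) = phi (nth la w j).
Proof.
move=> Hj; rewrite drop_morph (drop_nth la Hj) morph_cons.
by rewrite takel_cat ?size_phi // take_oversize ?size_phi.
Qed.

Hypothesis k_gt0 : 0 < k.

Lemma morph_inj u v : phi la <> phi lb -> morph phi u = morph phi v -> u = v.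
Proof.
move=> Hne; elim: u v => [|c u IH] [|d v] // E.
- by have := congr1 size E; rewrite !size_morph /=; lia.
- by have := congr1 size E; rewrite !size_morph /=; lia.
rewrite !morph_cons in E.
have [Ecd /IH ->] := cat_eq_size (etrans (size_phi c) (esym (size_phi d))) E.
by case: c d Ecd {E} => [] [] // /esym.
Qed.

Lemma block_of_factor v p u s j :
  morph phi v = p ++ u ++ s -> size p <= k * j -> k * j + k <= size p + size u ->
  phi (nth la v j) = take k (drop (k * j - size p) u).
Proof.
move=> Hv H1 H2.
have Hj : j < size v.
  have := congr1 size Hv; rewrite size_morph !size_cat => E.
  by rewrite -(ltn_pmul2l k_gt0); lia.
by rewrite -(nth_block_morph Hj) Hv take_drop_mid.
Qed.

Lemma shifted_block_morph v j e : e < k -> j.+1 < size v ->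
  take k (drop (k * j + e) (morph phi v)) =
  drop e (phi (nth la v j)) ++ take e (phi (nth la v j.+1)).
Proof.
move=> He Hj; rewrite addnC -drop_drop drop_morph.
rewrite (drop_nth la (ltnW Hj)) (drop_nth la Hj) !morph_cons drop_cat size_phi He.
rewrite take_cat size_drop size_phi ltnNge leq_subr /=.
by rewrite subKn ?takel_cat ?size_phi //; lia.
Qed.

Lemma cut_morph_prefix v p u s j : morph phi v = p ++ u ++ s ->
  j <= size u -> k %| size p + j ->
  exists2 i, i <= size v & morph phi (take i v) = p ++ take j u.
Proof.
move=> Ev Hj Hd; exists ((size p + j) %/ k).
  have := congr1 size Ev; rewrite size_morph !size_cat => Sz.
  by rewrite -(leq_pmul2l k_gt0) mulnC divnK //; lia.
rewrite -take_morph mulnC divnK // Ev take_cat ltnNge leq_addr /= addKn.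
by rewrite takel_cat.
Qed.

Lemma reduce_prefix v p u s : morph phi v = p ++ u ++ s ->
  exists v1 p1, [/\ infix v1 v, morph phi v1 = p1 ++ u ++ s & size p1 = size p %% k].
Proof.
move=> Hv; set q := size p %/ k.
have Hq : k * q <= size p by rewrite mulnC leq_divM.
exists (drop q v), (drop (k * q) p); split; first exact: infix_drop.
  rewrite -drop_morph Hv drop_cat; case: ifP => // H.
  have -> : k * q = size p by lia.
  by rewrite subnn drop0 drop_size.
by rewrite size_drop {1}(divn_eq (size p) k) mulnC addKn.
Qed.

Lemma short_interpretation w u : inS phi w u -> size w < size u ->
  exists v p s, [/\ inS phi w v, morph phi v = p ++ u ++ s & size p < k].
Proof.
move=> [[|n] Hn] Hu; first by move/size_infix: Hn; rewrite /=; lia.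
rewrite iterS in Hn; case/infixP: Hn => [s1 [s2 E]].
have [v1 [p1 [Iv1 E1 Ep1]]] := reduce_prefix E.
exists v1, p1, s2; split => //; last by rewrite Ep1 ltn_mod.
by exists n.
Qed.

(* Two interpretations whose prefix lengths differ modulo [k] cannot be
   synchronized at any position, since [morph phi] cuts only at multiples of [k]. *)
Lemma not_circular_of_offsets w :
  (forall N, exists u p v s p' v' s', [/\ N <= size u,
     interpretation phi w u p v s, interpretation phi w u p' v' s' &
     size p %% k != size p' %% k]) -> ~ circular phi w.
Proof.
move=> H [_ [_ [Z HZ]]].
have [u [p [v [s [p' [v' [s' [Hs I1 I2 /negP Hne]]]]]]]] := H Z.+1.
have [j [Hj Hsync]] := HZ u (inS_interpretation I1) Hs.
have [[i [Hi Ei]] [i' [Hi' Ei']]] := Hsync _ _ _ _ _ _ I1 I2.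
have /eqP := congr1 size Ei; have /eqP := congr1 size Ei'.
rewrite !size_morph !size_cat !size_take_min => E2 E1.
apply: Hne; rewrite -(eqn_modDr j); have Ej : minn j (size u) = j by lia.
by rewrite -Ej -(eqP E1) -(eqP E2) -!(minnC (size _)) !modnMr.
Qed.

End UniformMorphism.

Definition flip (c : letter) : letter := if c is la then lb else la.

Fixpoint alternating (c : letter) n : word :=
  if n is n'.+1 then c :: alternating (flip c) n' else [::].

Lemma flipK : involutive flip. Proof. by case. Qed.

Lemma flip_neq c : flip c <> c. Proof. by case: c. Qed.

Lemma letter_cases x c : x = c \/ x = flip c.
Proof. by case: x; case: c; auto. Qed.

Lemma iter_flip m c : iter m flip c = if odd m then flip c else c.
Proof. by elim: m => //= m ->; case: (odd m); rewrite ?flipK. Qed.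

Lemma size_alternating c n : size (alternating c n) = n.
Proof. by elim: n c => //= n IH c; rewrite IH. Qed.

Lemma alternatingD c m n :
  alternating c (m + n) = alternating c m ++ alternating (iter m flip c) n.
Proof. by elim: m c => //= m IH c; rewrite IH -iterSr iterS. Qed.

Lemma nth_alternating c n t : t < n -> nth la (alternating c n) t = iter t flip c.
Proof. by elim: n c t => // n IH c [|t] //= Ht; rewrite IH // -iterSr iterS. Qed.

Lemma alt_alternating m x : alt m x (flip x) = alternating x m.*2.+1.
Proof.
elim: m => // m IH.
by rewrite /alt doubleS /= -/(alt m x (flip x)) IH flipK.
Qed.

Lemma take_drop_alternating k t L c : t + k <= L ->
  take k (drop t (alternating c L)) = alternating (iter t flip c) k.
Proof.
move=> H; rewrite -(subnKC (leq_trans (leq_addr k t) H)) alternatingD.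
rewrite drop_size_cat ?size_alternating // -(subnKC (_ : k <= L - t)); last by lia.
by rewrite alternatingD take_size_cat ?size_alternating.
Qed.

Lemma alternating_infix c c' n L : n < L -> infix (alternating c n) (alternating c' L).
Proof.
move=> H; have [-> | Hc] := letter_cases c c'.
  by rewrite -(subnKC (ltnW H)) alternatingD; apply: prefix_infix.
case: L H => // L H; rewrite -(subnKC (H : n <= L)).
rewrite -[alternating c' _.+1]/(c' :: alternating (flip c') _) -Hc alternatingD.
by rewrite -cat1s; apply: infix_infix.
Qed.

Lemma nseq_infix (T : eqType) M N (c : T) : M <= N -> infix (nseq M c) (nseq N c).
Proof. by move=> H; rewrite -(subnKC H) nseqD; exact: prefix_infix. Qed.

Lemma take_drop_nseq (T : Type) k t L (c : T) :
  t + k <= L -> take k (drop t (nseq L c)) = nseq k c.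
Proof. by move=> H; rewrite drop_nseq take_nseq //; lia. Qed.

Lemma morph_nseq k phi c' c : phi c' = nseq k c -> forall n,
  morph phi (nseq n c') = nseq (k * n) c.
Proof.
move=> H; elim=> [|n IH]; first by rewrite muln0.
by rewrite /= morph_cons IH H mulnS nseqD.
Qed.

Lemma run_infix (w : word) m R c : m + R <= size w ->
  (forall t, t < R -> nth la w (m + t) = c) -> infix (nseq R c) w.
Proof.
move=> Hs H.
have <- : take R (drop m w) = nseq R c.
  apply: (@eq_from_nth _ la); first by rewrite size_take_min size_drop size_nseq; lia.
  move=> i; rewrite size_take_min size_drop => Hi.
  have Hi' : i < R by lia.
  by rewrite nth_take // nth_drop nth_nseq Hi' H.
exact: infix_trans (infix_take _ _) (infix_drop _ _).
Qed.

Lemma alternating_prefix_infix (w : word) A c : A <= size w ->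
  (forall t, t < A -> nth la w t = iter t flip c) -> infix (alternating c A) w.
Proof.
move=> Hs H.
have <- : take A w = alternating c A.
  apply: (@eq_from_nth _ la); first by rewrite size_take_min size_alternating; lia.
  move=> i; rewrite size_take_min => Hi.
  have Hi' : i < A by lia.
  by rewrite nth_take // nth_alternating // H.
exact: infix_take.
Qed.

Lemma has_transition (w : word) R c : (forall c, ~ infix (nseq R c) w) ->
  R.*2 <= size w -> exists i, [/\ i.+1 < size w, nth la w i = c & nth la w i.+1 = flip c].
Proof.
move=> HR Hs; apply: NNPP => H.
have P d i : i + d < size w -> nth la w i = c -> nth la w (i + d) = c.
  elim: d => [|d IH] Hd Hi; first by rewrite addn0.
  have := IH ltac:(lia) Hi; rewrite addnS => Hc.
  have [//|Hf] := letter_cases (nth la w (i + d).+1) c.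
  by case: H; exists (i + d); split; [lia| |].
have [HRc|HRc] := letter_cases (nth la w R) c.
  apply: (HR c); apply: (@run_infix _ R); first by lia.
  by move=> t Ht; apply: P => //; lia.
apply: (HR (flip c)); apply: (@run_infix _ 0); first by lia.
move=> t Ht; rewrite add0n; have [Hc|//] := letter_cases (nth la w t) c.
have := P (R - t) t ltac:(lia) Hc; rewrite subnKC ?HRc; last by lia.
by move/flip_neq.
Qed.

Lemma has_repeat (w : word) A : (forall c, ~ infix (alternating c A) w) ->
  A <= size w -> exists i, i.+1 < size w /\ nth la w i = nth la w i.+1.
Proof.
move=> HA Hs; apply: NNPP => H.
apply: (HA (nth la w 0)); apply: alternating_prefix_infix => // t Ht.
elim: t Ht => [|t IH] Ht //; rewrite iterS -IH; last by lia.
have [Hc|//] := letter_cases (nth la w t.+1) (nth la w t).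
by case: H; exists t; split; [lia|rewrite Hc].
Qed.

Definition exceptional (k : nat) (phi : letter -> word) : Prop :=
  (phi la = phi lb) \/
  (phi la = nseq k la \/ phi lb = nseq k lb) \/
  (phi la = nseq k lb /\ phi lb = nseq k la) \/
  (exists m, 1 <= m /\ k = m.*2.+1 /\ phi la = alt m la lb /\ phi lb = alt m lb la) \/
  (exists m, 1 <= m /\ k = m.*2.+1 /\ phi la = alt m lb la /\ phi lb = alt m la lb).

Section NonCircular.

Variables (k : nat) (phi : letter -> word).
Hypothesis size_phi : forall c, size (phi c) = k.
Hypothesis k_gt1 : 1 < k.

Lemma not_circular_of_runs w c' c : phi c' = nseq k c ->
  (forall M, inS phi w (nseq M c')) -> ~ circular phi w.
Proof.
move=> Hc HS; apply: (not_circular_of_offsets size_phi (ltnW k_gt1)) => N.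
have HN : N.+1 <= k * N.+1 by rewrite leq_pmull //; lia.
have Ec := morph_nseq Hc N.+1.
exists (nseq N c), [::], (nseq N.+1 c'), (nseq (k * N.+1 - N) c).
exists [:: c], (nseq N.+1 c'), (nseq (k * N.+1 - N.+1) c); split.
- by rewrite size_nseq.
- by split=> //; rewrite Ec /= -nseqD; congr nseq; lia.
- split=> //; rewrite Ec -[[:: c] ++ _]/(nseq 1 c ++ _) -!nseqD.
  by congr nseq; lia.
- by rewrite /= mod0n modn_small.
Qed.

Lemma not_circular_of_alternating w :
  (forall n c, exists v, inS phi w v /\ morph phi v = alternating c (k * n)) ->
  ~ circular phi w.
Proof.
move=> Halt; apply: (not_circular_of_offsets size_phi (ltnW k_gt1)) => N.
have HN : N.+1 <= k * N.+1 by rewrite leq_pmull //; lia.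
have [v [Sv Ev]] := Halt N.+1 la; have [v' [Sv' Ev']] := Halt N.+1 lb.
set c := iter N flip la.
exists (alternating la N), [::], v, (alternating c (k * N.+1 - N)).
exists [:: lb], v', (alternating c (k * N.+1 - N.+1)); split.
- by rewrite size_alternating.
- by split=> //; rewrite Ev -alternatingD; congr alternating; lia.
- split=> //; rewrite Ev' -(subnKC HN) addSn.
  rewrite -[alternating lb _.+1]/(lb :: alternating la _) -cat1s.
  by rewrite alternatingD subSS addKn.
- by rewrite /= mod0n modn_small.
Qed.

Lemma inS_nseq_of_powers w c : (forall t, inS phi w (nseq (k ^ t) c)) ->
  forall M, inS phi w (nseq M c).
Proof.
move=> H M; apply: inS_infix (H M); apply: nseq_infix.
exact: ltnW (ltn_expl M k_gt1).
Qed.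

Lemma phi_a_run_of_b_absent : ~ inS phi [:: la] [:: lb] -> phi la = nseq k la.
Proof.
move=> H; rewrite -(size_phi la); apply/all_pred1P/allP => -[] // Hx.
case: H; apply: inS_infix (inS_morph (inS_base phi [:: la])).
by rewrite /morph /= cats0 infix1s.
Qed.

Lemma not_circular_a_run : phi la = nseq k la -> ~ circular phi [:: la].
Proof.
move=> H; apply: (not_circular_of_runs H); apply: inS_nseq_of_powers.
elim=> [|t IH]; first exact: inS_base.
by rewrite expnS -(morph_nseq H); apply: inS_morph.
Qed.

Lemma not_circular_b_run : phi lb = nseq k lb -> ~ circular phi [:: la].
Proof.
move=> H; have [Hb|Hb] := classic (inS phi [:: la] [:: lb]); last first.
  exact: not_circular_a_run (phi_a_run_of_b_absent Hb).
apply: (not_circular_of_runs H); apply: inS_nseq_of_powers.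
elim=> [|t IH]; first exact: Hb.
by rewrite expnS -(morph_nseq H); apply: inS_morph.
Qed.

Lemma not_circular_swapped_runs :
  phi la = nseq k lb -> phi lb = nseq k la -> ~ circular phi [:: la].
Proof.
move=> Ha Hb; apply: (not_circular_of_runs Hb); apply: inS_nseq_of_powers => t.
suff [] : inS phi [:: la] (nseq (k ^ t) la) /\ inS phi [:: la] (nseq (k ^ t) lb) by [].
elim: t => [|t [IHa IHb]].
  split; first exact: inS_base.
  apply: inS_infix (inS_morph (inS_base phi [:: la])).
  by rewrite /morph /= cats0 Ha infix1s mem_nseq eqxx andbT; lia.
by rewrite expnS -(morph_nseq Ha) -(morph_nseq Hb); split; apply: inS_morph.
Qed.

Lemma not_circular_eq_images : phi la = phi lb -> ~ circular phi [:: la].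
Proof.
move=> H; have [Hb|Hb] := classic (inS phi [:: la] [:: lb]); last first.
  exact: not_circular_a_run (phi_a_run_of_b_absent Hb).
case=> _ [Hinj _]; have := Hinj [:: la] [:: lb] (inS_base _ _) Hb.
by rewrite /morph /= H => /(_ erefl).
Qed.

(* Cases (iv) and (v): [g] is the identity or [flip]. *)
Lemma not_circular_alternating_images (g : letter -> letter) :
  involutive g -> (forall c, g (flip c) = flip (g c)) -> odd k ->
  (forall c, phi c = alternating (g c) k) -> ~ circular phi [:: la].
Proof.
move=> gK g_flip k_odd H.
have M n c : morph phi (alternating c n) = alternating (g c) (k * n).
  elim: n c => [|n IH] c; first by rewrite muln0.
  by rewrite /= morph_cons IH H mulnS alternatingD iter_flip k_odd g_flip.
have Spow t : exists c, inS phi [:: la] (alternating c (k ^ t)).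
  elim: t => [|t [c IH]]; first by exists la; exact: inS_base.
  by exists (g c); rewrite expnS -M; apply: inS_morph.
apply: not_circular_of_alternating => n c; exists (alternating (g c) n).
rewrite M gK; split=> //.
have [c' Hc'] := Spow n.+1; apply: inS_infix Hc'; apply: alternating_infix.
exact: ltn_trans (ltnSn n) (ltn_expl n.+1 k_gt1).
Qed.

Lemma not_circular_of_exceptional : exceptional k phi -> ~ circular phi [:: la].
Proof.
case=> [E|[[E|E]|[[Ea Eb]|[[m [_ [Ek [Ea Eb]]]]|[m [_ [Ek [Ea Eb]]]]]]]].
- exact: not_circular_eq_images.
- exact: not_circular_a_run.
- exact: not_circular_b_run.
- exact: not_circular_swapped_runs.
- apply: (not_circular_alternating_images (g := id)) => //.
    by rewrite Ek /= odd_double.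
  by case; rewrite ?Ea ?Eb Ek -alt_alternating.
- apply: (not_circular_alternating_images (g := flip)) => //; first exact: flipK.
    by rewrite Ek /= odd_double.
  by case; rewrite ?Ea ?Eb Ek -alt_alternating.
Qed.

End NonCircular.

Definition shifted_image (phi : letter -> word) e c1 c2 : Prop :=
  exists x, drop e (phi c1) ++ take e (phi c2) = phi x.

Section Circular.

Variables (k : nat) (phi : letter -> word).
Hypothesis size_phi : forall c, size (phi c) = k.
Hypothesis k_gt1 : 1 < k.

Let k_gt0 : 0 < k := ltnW k_gt1.

(* The block of index 1 of an interpretation lies inside the run. *)
Lemma no_double_run c : (forall x, phi x <> nseq k c) ->
  ~ inS phi [:: la] (nseq k.*2 c).
Proof.
move=> Hc HS.
have [v [p [s [_ Ev Hp]]]] :=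
  short_interpretation size_phi k_gt0 HS ltac:(rewrite /= size_nseq; lia).
have := block_of_factor size_phi k_gt0 (j := 1) Ev ltac:(lia)
  ltac:(rewrite size_nseq; lia).
by rewrite take_drop_nseq; [exact: Hc | lia].
Qed.

Lemma no_run_of_image c' c R : phi c' = nseq k c -> phi (flip c') <> nseq k c ->
  ~ inS phi [:: la] (nseq R c') -> ~ inS phi [:: la] (nseq (k * R.+2) c).
Proof.
move=> Hc' Hfc' HR HS.
have [v [p [s [Sv Ev Hp]]]] :=
  short_interpretation size_phi k_gt0 HS ltac:(rewrite /= size_nseq; nia).
apply: HR; apply: inS_infix Sv; apply: (@run_infix _ 1).
  by have := congr1 size Ev; rewrite (size_morph size_phi) !size_cat size_nseq; nia.
move=> t Ht.
have := block_of_factor size_phi k_gt0 (j := 1 + t) Ev ltac:(nia)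
  ltac:(rewrite size_nseq; nia).
rewrite take_drop_nseq; last by nia.
by have [->|->] := letter_cases (nth la v (1 + t)) c' => // /Hfc'.
Qed.

Lemma alternating_blocks v p c L s j :
  morph phi v = p ++ alternating c L ++ s -> size p < k -> 0 < j ->
  k * j + k <= size p + L ->
  phi (nth la v j) = alternating (iter (k * j - size p) flip c) k.
Proof.
move=> Ev Hp Hj HL; rewrite (block_of_factor size_phi k_gt0 Ev); last 2 first.
- by nia.
- by rewrite size_alternating.
by rewrite take_drop_alternating //; nia.
Qed.

Lemma exceptional_of_alternating_images x e : odd k ->
  phi x = alternating e k -> phi (flip x) = alternating (flip e) k ->
  exceptional k phi.
Proof.
move=> k_odd Ex Efx.
have Ek : k = (k./2).*2.+1 by move: (odd_double_half k); rewrite k_odd; lia.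
have m_gt0 : 1 <= k./2 by lia.
have Aa c : alt k./2 c (flip c) = alternating c k by rewrite alt_alternating -Ek.
do 3 right; case: x e Ex Efx => -[] /= Ex Efx; [left|right|right|left];
  by exists k./2; rewrite !Aa.
Qed.

Hypothesis phi_regular : ~ exceptional k phi.

Lemma phi_letter_inj : injective phi.
Proof.
by case=> -[] // E; case: phi_regular; left; rewrite E.
Qed.

Lemma phi_neq_run c : phi c <> nseq k c.
Proof. by case: c => E; apply: phi_regular; right; left; [left|right]. Qed.

Lemma phi_not_swapped_runs c :
  phi c = nseq k (flip c) -> phi (flip c) <> nseq k c.
Proof. by case: c => /= E1 E2; apply: phi_regular; do 2 right; left. Qed.

Lemma runs_bounded c : ~ inS phi [:: la] (nseq (k * k.*2.+2) c).
Proof.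
have le2 : k.*2 <= k * k.*2.+2 by nia.
case: (eqVneq (phi (flip c)) (nseq k c)) => [Ec|/eqP Ec]; last first.
  move/(inS_infix (nseq_infix c le2)); apply: no_double_run => x.
  by have [->|->] := letter_cases x c; [exact: phi_neq_run|].
apply: (no_run_of_image Ec); first by rewrite flipK; exact: phi_neq_run.
apply: no_double_run => x; have [->|->] := letter_cases x (flip c).
  exact: phi_neq_run.
by rewrite flipK => /phi_not_swapped_runs.
Qed.

(* For odd [k] two consecutive blocks inside an alternating factor are
   alternating words starting with opposite letters, which forces case (iv) or
   (v); for even [k] all these blocks coincide and yield a long run. *)
Lemma alternations_bounded R c : 0 < R -> (forall c, ~ inS phi [:: la] (nseq R c)) ->
  ~ inS phi [:: la] (alternating c (k * R.+3)).
Proof.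
move=> R_gt0 HR HS.
have [v [p [s [Sv Ev Hp]]]] :=
  short_interpretation size_phi k_gt0 HS ltac:(rewrite /= size_alternating; nia).
have B j : 0 < j <= R.+1 ->
    phi (nth la v j) = alternating (iter (k * (j.-1) + (k - size p)) flip c) k.
  case/andP=> j0 jR; rewrite (alternating_blocks Ev) //; last by nia.
  by congr (alternating (iter _ _ _) _); nia.
case k_odd: (odd k).
  have B1 := B 1 erefl; have B2 := B 2 ltac:(lia).
  rewrite muln0 add0n in B1; rewrite muln1 iterD iter_flip k_odd in B2.
  have [E12|E12] := letter_cases (nth la v 2) (nth la v 1).
    move: B2; rewrite E12 B1 => /(congr1 (nth la ^~ 0)).
    by rewrite !nth_alternating //= => /esym /flip_neq.
  by apply: phi_regular; apply: (exceptional_of_alternating_images k_odd B1); rewrite -E12.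
have E j : 0 < j <= R.+1 -> nth la v j = nth la v 1.
  move=> Hj; apply: phi_letter_inj; rewrite (B j Hj) (B 1 erefl) iterD iter_flip.
  by rewrite oddM k_odd muln0 add0n.
apply: (HR (nth la v 1)); apply: inS_infix Sv; apply: (@run_infix _ 1).
  by have := congr1 size Ev; rewrite (size_morph size_phi) !size_cat size_alternating; nia.
by move=> t Ht; apply: E; lia.
Qed.

Lemma no_shifted_images e c : 0 < e < k ->
  shifted_image phi e la lb -> shifted_image phi e lb la -> shifted_image phi e c c ->
  False.
Proof.
move=> He Hab Hba Hcc.
have Sx d : size (take e (phi d)) = e by rewrite size_take_min size_phi; lia.
have Sy d : size (drop e (phi d)) = k - e by rewrite size_drop size_phi.
have Ex d : phi d = take e (phi d) ++ drop e (phi d) by rewrite cat_take_drop.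
have img c1 c2 : shifted_image phi e c1 c2 ->
    let w := drop e (phi c1) ++ take e (phi c2) in w = phi la \/ w = phi lb.
  by case=> -[] ->; auto.
have Hne : phi la <> phi lb by move/phi_letter_inj.
move: Hab Hba Hcc => /img Hab /img Hba /img Hcc.
case: c Hcc => Hcc.
  apply: (@shifted_factors_absurd _ (take e (phi la)) (drop e (phi la))
    (take e (phi lb)) (drop e (phi lb))); rewrite ?Sx ?Sy -?Ex //; lia.
apply: (@shifted_factors_absurd _ (take e (phi lb)) (drop e (phi lb))
  (take e (phi la)) (drop e (phi la))); rewrite ?Sx ?Sy -?Ex //; try lia.
- by move/esym.
- by case: Hba; auto.
- by case: Hab; auto.
- by case: Hcc; auto.
Qed.

(* Shifting the second interpretation by [size p2 - size p1] realigns each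
   block of the second one with two consecutive blocks of the first. *)
Lemma misaligned_shifted_image v1 v2 p1 p2 u s1 s2 i :
  morph phi v1 = p1 ++ u ++ s1 -> morph phi v2 = p2 ++ u ++ s2 ->
  size p1 < size p2 < k -> k * i.+2 <= size u ->
  shifted_image phi (k - (size p2 - size p1)) (nth la v1 i) (nth la v1 i.+1).
Proof.
move=> E1 E2 Hp Hu; set e := k - _.
have Sv1 : size u <= k * size v1.
  by have := congr1 size E1; rewrite (size_morph size_phi) !size_cat; lia.
have B1 := @shifted_block_morph k phi size_phi k_gt0 v1 i e ltac:(lia) ltac:(nia).
rewrite E1 take_drop_mid in B1; [|nia|nia].
have Ht : k * i + e - size p1 = k * i.+1 - size p2 by rewrite /e; nia.
rewrite Ht in B1; exists (nth la v2 i.+1); rewrite -B1.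
by apply: esym; apply: (block_of_factor size_phi k_gt0 E2); nia.
Qed.

(* A long factor without long runs or alternations contains the transitions
   [ab], [ba] and a square [cc], which [no_shifted_images] forbids. *)
Lemma no_misaligned_interpretations R A v1 v2 p1 p2 u s1 s2 :
  (forall c, ~ inS phi [:: la] (nseq R c)) ->
  (forall c, ~ inS phi [:: la] (alternating c A)) ->
  inS phi [:: la] v1 -> morph phi v1 = p1 ++ u ++ s1 -> morph phi v2 = p2 ++ u ++ s2 ->
  size p1 < size p2 < k -> k * (R.*2 + A).+2 <= size u -> False.
Proof.
move=> HR HA S1 E1 E2 Hp Hu.
set n := size u %/ k.
have Hn : (R.*2 + A).+2 <= n by rewrite /n leq_divRL // mulnC.
have Sv1 : size u <= k * size v1.
  by have := congr1 size E1; rewrite (size_morph size_phi) !size_cat; lia.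
have Ed i : i.+1 < n -> shifted_image phi (k - (size p2 - size p1))
    (nth la v1 i) (nth la v1 i.+1).
  move=> Hi; apply: misaligned_shifted_image E1 E2 Hp _.
  by rewrite mulnC -leq_divRL.
set w := take n v1.
have Sw : inS phi [:: la] w by apply: inS_infix S1; apply: infix_take.
have szw : size w = n by rewrite size_take_min; nia.
have nthw i : i < n -> nth la w i = nth la v1 i by move=> Hi; rewrite nth_take.
have HRw c : ~ infix (nseq R c) w by move=> H; apply: (HR c); apply: inS_infix Sw.
have HAw c : ~ infix (alternating c A) w by move=> H; apply: (HA c); apply: inS_infix Sw.
have HwR : R.*2 <= size w by rewrite szw; lia.
have HwA : A <= size w by rewrite szw; lia.
have [i1 [Hi1 Ai1 Bi1]] := has_transition la HRw HwR.
have [i2 [Hi2 Ai2 Bi2]] := has_transition lb HRw HwR.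
have [i3 [Hi3 Ci3]] := has_repeat HAw HwA.
rewrite szw in Hi1 Hi2 Hi3; rewrite !nthw in Ai1 Bi1 Ai2 Bi2 Ci3; try lia.
apply: (@no_shifted_images (k - (size p2 - size p1)) (nth la v1 i3)); first by lia.
- by have := Ed i1 Hi1; rewrite Ai1 Bi1.
- by have := Ed i2 Hi2; rewrite Ai2 Bi2.
- by have := Ed i3 Hi3; rewrite -Ci3.
Qed.

Lemma interpretations_aligned R A u p v s p' v' s' :
  (forall c, ~ inS phi [:: la] (nseq R c)) ->
  (forall c, ~ inS phi [:: la] (alternating c A)) ->
  k * (R.*2 + A).+2 <= size u ->
  interpretation phi [:: la] u p v s -> interpretation phi [:: la] u p' v' s' ->
  size p %% k = size p' %% k.
Proof.
move=> HR HA Hu [Sv Ev] [Sv' Ev'].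
have [v1 [p1 [I1 E1 Z1]]] := reduce_prefix size_phi k_gt0 Ev.
have [v2 [p2 [I2 E2 Z2]]] := reduce_prefix size_phi k_gt0 Ev'.
have L1 : size p1 < k by rewrite Z1 ltn_mod.
have L2 : size p2 < k by rewrite Z2 ltn_mod.
have no_mis := no_misaligned_interpretations HR HA.
case: (ltngtP (size p1) (size p2)) => H.
- by case: (no_mis v1 v2 p1 p2 u s s' (inS_infix I1 Sv) E1 E2 ltac:(lia) Hu).
- by case: (no_mis v2 v1 p2 p1 u s' s (inS_infix I2 Sv') E2 E1 ltac:(lia) Hu).
- by rewrite -Z1 -Z2 H.
Qed.

Lemma circular_of_bounded R A :
  (forall c, ~ inS phi [:: la] (nseq R c)) ->
  (forall c, ~ inS phi [:: la] (alternating c A)) ->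
  circular phi [:: la].
Proof.
move=> HR HA.
split; first by move=> c E; have := size_phi c; rewrite E /=; lia.
split; first by move=> u v _ _; apply: (morph_inj size_phi k_gt0); move/phi_letter_inj.
exists (k * (R.*2 + A).+2) => u Su Hu.
have Hk : k <= size u by apply: leq_trans (ltnW Hu); rewrite leq_pmulr.
have [v0 [p0 [s0 [Sv0 Ev0 _]]]] := short_interpretation size_phi k_gt0 Su ltac:(rewrite /=; lia).
have I0 : interpretation phi [:: la] u p0 v0 s0 by [].
exists (k - size p0 %% k); split=> [|p v s p' v' s' I1 I2]; first by lia.
have cut p1 v1 s1 : interpretation phi [:: la] u p1 v1 s1 ->
    exists2 i, i <= size v1 & morph phi (take i v1) = p1 ++ take (k - size p0 %% k) u.
  move=> I; have [_ Ev] := I; apply: (cut_morph_prefix size_phi k_gt0 Ev); first by lia.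
  have t_le : size p0 %% k <= k by rewrite ltnW ?ltn_mod.
  rewrite (divn_eq (size p1) k) (interpretations_aligned HR HA (ltnW Hu) I I0).
  by rewrite -addnA subnKC // dvdn_add ?dvdn_mull.
by split; [have [i] := cut _ _ _ I1 | have [i] := cut _ _ _ I2]; exists i.
Qed.

Lemma circular_of_regular : circular phi [:: la].
Proof.
apply: (circular_of_bounded runs_bounded) => c.
by apply: (alternations_bounded _ runs_bounded); rewrite muln_gt0 k_gt0.
Qed.

End Circular.

Unset Implicit Arguments.

Theorem mainTheorem4 (k : nat) (phi : letter -> word) :
  2 <= k -> uniform k phi ->
  (~ circular phi [:: la] <->
   (phi la = phi lb) \/
   (phi la = nseq k la \/ phi lb = nseq k lb) \/
   (phi la = nseq k lb /\ phi lb = nseq k la) \/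
   (exists m, 1 <= m /\ k = m.*2.+1 /\ phi la = alt m la lb /\ phi lb = alt m lb la) \/
   (exists m, 1 <= m /\ k = m.*2.+1 /\ phi la = alt m lb la /\ phi lb = alt m la lb)).
Proof.
move=> k_gt1 [size_a size_b].
have size_phi : forall c, size (phi c) = k by case.
split=> [not_circ | exc]; last exact: not_circular_of_exceptional size_phi k_gt1 exc.
by apply: NNPP => regular; apply: not_circ; exact: circular_of_regular size_phi k_gt1 regular.
Qed.
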